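(* Let $d\geq 1$, let $\mathscr{Y}=(\mathbb{P}^5)^d$ be the variety of $d$-tuples of conics in $\mathbb{P}^2$ (over $\mathbb{C}$), and let $h$ be a rational function on $\mathscr{Y}$. Suppose that for every $d$-tuple $(\mathcal{C}_1,\dots,\mathcal{C}_d)$ of conics in $\mathbb{P}^3$ and every two camera projections $\pi,\pi'$ for which both sides are defined, $h(\pi(\mathcal{C}_1),\dots,\pi(\mathcal{C}_d))=h(\pi'(\mathcal{C}_1),\dots,\pi'(\mathcal{C}_d))$. Then $h$ is constant. In other words, there is no nonconstant rational invariant of $d$ conics in $\mathbb{P}^3$ that can be computed from their perspective projection.
   Context: A conic in $\mathbb{P}^2$ is the zero set of a nonzero quadratic form in $3$ variables, up to scalar, so the conics in $\mathbb{P}^2$ are parametrized by $\mathbb{P}^5$. A conic in $\mathbb{P}^3$ is a nondegenerate conic contained in a plane of $\mathbb{P}^3$. A camera projection with center $\bar{o}\in\mathbb{P}^3$ is a map $\pi:\mathbb{P}^3\setminus\{\bar{o}\}\to\mathbb{P}^2$ induced by a rank-$3$ complex $3\times4$ matrix whose kernel is $\bar{o}$; the image $\pi(\mathcal{C})$ of a conic $\mathcal{C}$ whose plane does not contain $\bar{o}$ is a conic in $\mathbb{P}^2$. *)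

From HB Require Import structures.
From mathcomp Require Import all_boot all_order all_algebra.
From mathcomp Require Import mpoly.
From mathcomp Require Import complex.
From mathcomp Require Import reals.

Set Implicit Arguments.
Unset Strict Implicit.
Unset Printing Implicit Defensive.

Import Order.TTheory GRing.Theory Num.Theory.
Local Open Scope ring_scope.

Notation CC R := (complex (Real.sort R)).

Section Defs.
Variable F : fieldType.

(* Coordinates on P^5: a conic in P^2 given by the coefficient vector
   a = (a0,..,a5) of the quadratic form
   a0 x^2 + a1 y^2 + a2 z^2 + a3 xy + a4 xz + a5 yz. *)
Definition conic_eval (a : 'rV[F]_6) (w : 'cV[F]_3) : F :=
  a 0 0 * w 0 0 ^+ 2 + a 0 1 * w 1 0 ^+ 2 + a 0 2%:R * w 2%:R 0 ^+ 2
  + a 0 3%:R * (w 0 0 * w 1 0) + a 0 4%:R * (w 0 0 * w 2%:R 0)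
  + a 0 5%:R * (w 1 0 * w 2%:R 0).

Definition qform (B : 'M[F]_3) (u : 'cV[F]_3) : F := (u^T *m B *m u) 0 0.

(* A conic in P^3: the plane spanned by the columns of M (rank 3), and in
   plane coordinates u the nondegenerate conic u^T B u = 0 (B symmetric,
   invertible).  Its points are [M u] for u <> 0 with u^T B u = 0. *)
Definition conic3 (M : 'M[F]_(4,3)) (B : 'M[F]_3) : Prop :=
  \rank M = 3%N /\ B^T = B /\ \det B != 0.

Definition camera (P : 'M[F]_(3,4)) : Prop := \rank P = 3%N.

(* The plane of the conic (column span of M) does not contain the center of P. *)
Definition center_off_plane (P : 'M[F]_(3,4)) (M : 'M[F]_(4,3)) : Prop :=
  forall u : 'cV[F]_3, M *m u != 0 -> P *m (M *m u) != 0.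

(* a (a point of P^5) is the conic pi(C): its zero set in P^2 equals the
   image under P of the (affine cone over the) conic C = (M, B). *)
Definition is_image_conic (a : 'rV[F]_6) (P : 'M[F]_(3,4))
    (M : 'M[F]_(4,3)) (B : 'M[F]_3) : Prop :=
  a != 0 /\
  forall w : 'cV[F]_3,
    (w != 0 /\ conic_eval a w = 0) <->
    (exists u : 'cV[F]_3, u != 0 /\ qform B u = 0 /\ w = P *m (M *m u)).

(* Variables of the coordinate ring of (P^5)^d: variable (i,j) is the j-th
   homogeneous coordinate of the i-th factor. *)
Definition blockdeg (d : nat) (m : 'X_{1.. d * 6}) (i : 'I_d) : nat :=
  (\sum_(j < 6) m (mxvec_index i j))%N.

Definition multihomog (d : nat) (e : 'I_d -> nat) (p : {mpoly F[d * 6]}) : Prop :=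
  forall m, m \in msupp p -> forall i, blockdeg m i = e i.

(* A rational function on (P^5)^d, represented as p/q with q nonzero and
   p, q multihomogeneous of the same multidegree. *)
Definition rat_fun_repr (d : nat) (p q : {mpoly F[d * 6]}) : Prop :=
  q != 0 /\ exists e : 'I_d -> nat, multihomog e p /\ multihomog e q.

(* Evaluation at a d-tuple of conics Y (row i of Y = coordinates of the i-th conic). *)
Definition mevalY (d : nat) (p : {mpoly F[d * 6]}) (Y : 'M[F]_(d, 6)) : F :=
  p.@[fun k => mxvec Y 0 k].

End Defs.

(* A camera [P] maps the plane [M] of a conic to the image plane by [P M]; if
   [P M = H], it sees the conic [a] (in plane coordinates) as [a] acted on by
   [H^-1].  Taking [P M = 1] and [P' M = (1 + u v^T)^-1] for the plane of one
   conic and [P M = P' M = 1] for all others, invariance gives [h(Y) = h(Y')]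
   whenever [Y'] differs from [Y] by an elementary matrix acting on one conic.
   Along a composite of such moves the denominator may vanish; scaling all moves
   by a parameter [s] turns the ratio identity into a polynomial identity in [s]
   valid off finitely many points, hence at [s = 1].  Every conic with nonzero
   leading principal minors is [x^2 + y^2 + z^2] acted on by an upper triangular
   matrix, a product of three elementary ones, so [p q(Y0) - q p(Y0)] vanishes
   wherever these minors do not, hence everywhere. *)

From mathcomp Require Import all_boot all_order all_algebra.
From mathcomp Require Import mpoly.
From mathcomp Require Import complex.
From mathcomp Require Import reals.
From mathcomp Require Import ring.

Set Implicit Arguments.
Unset Strict Implicit.
Unset Printing Implicit Defensive.
Import Order.TTheory GRing.Theory Num.Theory.
Local Open Scope ring_scope.

Lemma ord3_cases (i : 'I_3) : [\/ i = 0, i = 1 | i = 2%:R].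
Proof. by case: i => -[|[|[|//]]] ?; [constructor 1|constructor 2|constructor 3]; apply/val_inj. Qed.

Lemma ord6_cases (i : 'I_6) :
  [\/ i = 0, i = 1 | i = 2%:R] \/ [\/ i = 3%:R, i = 4%:R | i = 5%:R].
Proof.
case: i => -[|[|[|[|[|[|//]]]]]] ?;
  [left; constructor 1|left; constructor 2|left; constructor 3|
   right; constructor 1|right; constructor 2|right; constructor 3]; exact/val_inj.
Qed.

Section ConicCoordinates.
Variable T : comNzRingType.

Lemma mulmx3E m n (A : 'M[T]_(m, 3)) (B : 'M[T]_(3, n)) i j :
  (A *m B) i j = A i 0 * B 0 j + A i 1 * B 1 j + A i 2%:R * B 2%:R j.
Proof.
rewrite mxE !big_ord_recl big_ord0 addr0 addrA.
by congr (_ * _ + _ * _ + _ * _); congr (_ _ _); apply/val_inj.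
Qed.

Definition conic_form (a : 'rV[T]_6) (x y z : T) : T :=
  a 0 0 * x ^+ 2 + a 0 1 * y ^+ 2 + a 0 2%:R * z ^+ 2
  + a 0 3%:R * (x * y) + a 0 4%:R * (x * z) + a 0 5%:R * (y * z).

Definition conic_val (a : 'rV[T]_6) (w : 'cV[T]_3) : T :=
  conic_form a (w 0 0) (w 1 0) (w 2%:R 0).

Definition col3 (x y z : T) : 'cV[T]_3 := \col_(i < 3) [:: x; y; z]`_i.

Lemma conic_val_col3 a x y z : conic_val a (col3 x y z) = conic_form a x y z.
Proof. by rewrite /conic_val !mxE. Qed.

Lemma conic_val_inj a b : conic_val a =1 conic_val b -> a = b.
Proof.
move=> eq_ab; have eq_form x y z : conic_form a x y z = conic_form b x y z.
  by rewrite -!conic_val_col3 eq_ab.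
have coefE (c : 'rV[T]_6) : [/\ c 0 0 = conic_form c 1 0 0, c 0 1 = conic_form c 0 1 0,
    c 0 2%:R = conic_form c 0 0 1,
    c 0 3%:R = conic_form c 1 1 0 - conic_form c 1 0 0 - conic_form c 0 1 0
  & [/\ c 0 4%:R = conic_form c 1 0 1 - conic_form c 1 0 0 - conic_form c 0 0 1
  & c 0 5%:R = conic_form c 0 1 1 - conic_form c 0 1 0 - conic_form c 0 0 1]].
  by split; [| | | |split]; rewrite /conic_form; ring.
have [a0 a1 a2 a3 [a4 a5]] := coefE a; have [b0 b1 b2 b3 [b4 b5]] := coefE b.
apply/rowP => k.
by case: (ord6_cases k) => [[]|[]] ->; rewrite ?(a0, a1, a2, a3, a4, a5, b0, b1, b2, b3, b4, b5) !eq_form.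
Qed.

(* The coefficients of [w |-> conic_val a (g *m w)], read off by polarization. *)
Definition conic_act (a : 'rV[T]_6) (g : 'M[T]_3) : 'rV[T]_6 :=
  let c j := conic_val a (col j g) in
  let c2 j l := conic_val a (col j g + col l g) - c j - c l in
  \row_(k < 6) [:: c 0; c 1; c 2%:R; c2 0 1; c2 0 2%:R; c2 1 2%:R]`_k.

Lemma conic_act_val a g w : conic_val (conic_act a g) w = conic_val a (g *m w).
Proof. by rewrite /conic_val /conic_form !mulmx3E !mxE /= /conic_val /conic_form !mxE; ring. Qed.

Lemma conic_actM a g1 g2 : conic_act (conic_act a g1) g2 = conic_act a (g1 *m g2).
Proof. by apply: conic_val_inj => w; rewrite !conic_act_val mulmxA. Qed.

Lemma conic_act1 a : conic_act a 1%:M = a.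
Proof. by apply: conic_val_inj => w; rewrite conic_act_val mul1mx. Qed.

Definition conic_mx (a : 'rV[T]_6) : 'M[T]_3 :=
  \matrix_(i < 3, j < 3) (nth [::] [:: [:: a 0 0 *+ 2; a 0 3%:R; a 0 4%:R];
                                     [:: a 0 3%:R; a 0 1 *+ 2; a 0 5%:R];
                                     [:: a 0 4%:R; a 0 5%:R; a 0 2%:R *+ 2]] i)`_j.

Lemma conic_mx_sym a : (conic_mx a)^T = conic_mx a.
Proof.
apply/matrixP => i j; rewrite !mxE.
by case: (ord3_cases i) => ->; case: (ord3_cases j) => ->.
Qed.

Lemma conic_mx_val a w : (w^T *m conic_mx a *m w) 0 0 = conic_val a w *+ 2.
Proof. by rewrite !mulmx3E !mxE ?mulmx3E ?mxE /conic_val /conic_form /=; ring. Qed.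

Lemma conic_mx_act a g : conic_mx (conic_act a g) = g^T *m conic_mx a *m g.
Proof.
apply/matrixP => i j; rewrite !mulmx3E !mxE ?mulmx3E ?mxE /conic_val /conic_form /=.
by case: (ord3_cases i) => ->; case: (ord3_cases j) => -> /=; rewrite !mxE; ring.
Qed.

Definition conic_disc a := \det (conic_mx a).

Lemma conic_disc_act a g : conic_disc (conic_act a g) = \det g ^+ 2 * conic_disc a.
Proof. by rewrite /conic_disc conic_mx_act !det_mulmx det_tr; ring. Qed.

Lemma conic_disc0 : conic_disc (0 : 'rV[T]_6) = 0.
Proof.
rewrite /conic_disc (_ : conic_mx 0 = 0) ?det0 //.
apply/matrixP => i j; rewrite !mxE.
by case: (ord3_cases i) => ->; case: (ord3_cases j) => -> /=; rewrite ?mxE ?mul0rn.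
Qed.

(* Half the product of the leading principal minors of [conic_mx a]. *)
Definition lead_minors (a : 'rV[T]_6) : T :=
  a 0 0 * (4 * a 0 0 * a 0 1 - a 0 3%:R ^+ 2) * conic_disc a.

End ConicCoordinates.

Section ConicMorphism.
Variables (T T' : comNzRingType) (f : {rmorphism T -> T'}).

Lemma map_conic_act a g : map_mx f (conic_act a g) = conic_act (map_mx f a) (map_mx f g).
Proof.
apply/rowP => k; rewrite !mxE.
by case: (ord6_cases k) => [[]|[]] -> /=; rewrite /conic_val /conic_form !mxE;
  rewrite ?(rmorphD, rmorphN, rmorphB, rmorphM, rmorphXn).
Qed.

Lemma map_conic_mx a : map_mx f (conic_mx a) = conic_mx (map_mx f a).
Proof.
apply/matrixP => i j; rewrite !mxE.
by case: (ord3_cases i) => ->; case: (ord3_cases j) => -> /=; rewrite ?rmorphMn ?mxE.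
Qed.

Lemma map_lead_minors a : f (lead_minors a) = lead_minors (map_mx f a).
Proof.
rewrite /lead_minors /conic_disc -map_conic_mx det_map_mx !mxE.
by rewrite !(rmorphM, rmorphB, rmorphXn) rmorph_nat.
Qed.

End ConicMorphism.

Section Moves.
Variables (T : comNzRingType) (d : nat).

Definition set_row (Y : 'M[T]_(d, 6)) (i : 'I_d) (r : 'rV[T]_6) : 'M[T]_(d, 6) :=
  \matrix_(j, k) if j == i then r 0 k else Y j k.

Lemma row_set_row Y i r j : row j (set_row Y i r) = if j == i then r else row j Y.
Proof. by apply/rowP => k; rewrite !mxE; case: (j == i); rewrite ?mxE. Qed.

Definition move := ('I_d * 'cV[T]_3 * 'cV[T]_3)%type.

Definition move_mx (o : move) : 'M[T]_3 := 1%:M + o.1.2 *m o.2^T.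

Definition apply_move (Y : 'M[T]_(d, 6)) (o : move) : 'M[T]_(d, 6) :=
  set_row Y o.1.1 (conic_act (row o.1.1 Y) (move_mx o)).

Definition apply_moves (Y : 'M[T]_(d, 6)) (os : seq move) := foldl apply_move Y os.

Lemma row_apply_moves os Y j :
  row j (apply_moves Y os) = conic_act (row j Y) (\prod_(o <- os | o.1.1 == j) move_mx o).
Proof.
elim: os Y => [|o os IH] Y; first by rewrite big_nil conic_act1.
rewrite /= IH big_cons /apply_move row_set_row eq_sym.
by case: eqP => [<-|_] //; rewrite conic_actM mulmxE.
Qed.

End Moves.

Section MovesMorphism.
Variables (T T' : comNzRingType) (f : {rmorphism T -> T'}) (d : nat).

Definition map_move (o : move T d) : move T' d := (o.1.1, map_mx f o.1.2, map_mx f o.2).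

Lemma map_move_mx o : map_mx f (move_mx o) = move_mx (map_move o).
Proof. by rewrite /move_mx map_mxD map_mx1 map_mxM map_trmx. Qed.

Lemma map_apply_moves os Y :
  map_mx f (apply_moves Y os) = apply_moves (map_mx f Y) (map map_move os).
Proof.
elim: os Y => [|o os IH] Y //=; rewrite IH; congr apply_moves.
apply/row_matrixP => j; rewrite -map_row !row_set_row; case: (j == o.1.1).
  by rewrite map_conic_act map_row map_move_mx.
by rewrite map_row.
Qed.

End MovesMorphism.

Lemma sum_digits_inj N n (a b : 'I_n -> nat) :
  (forall i, a i < N)%N -> (forall i, b i < N)%N ->
  (\sum_(i < n) a i * N ^ i = \sum_(i < n) b i * N ^ i)%N -> a =1 b.
Proof.
elim: n a b => [|n IH] a b a_lt b_lt + i; first by case: i.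
have shift (c : 'I_n.+1 -> nat) : (\sum_(i < n.+1) c i * N ^ i
    = c ord0 + N * \sum_(i < n) c (lift ord0 i) * N ^ i)%N.
  by rewrite big_ord_recl muln1 big_distrr; congr (_ + _)%N; apply: eq_bigr => j _; rewrite expnS mulnCA.
rewrite !shift => eq_ab.
have eq0 : a ord0 = b ord0.
  by move/(congr1 (modn^~ N)): eq_ab; rewrite !(addnC (_ ord0)) !(mulnC N) !modnMDl !modn_small.
move: eq_ab; rewrite eq0 => /addnI /eqP; rewrite eqn_mul2l => /orP [/eqP N0|/eqP eq_tail].
  by move: (a_lt ord0); rewrite N0.
case: (unliftP ord0 i) => [j ->|->] //.
exact: (IH (fun j => a (lift ord0 j)) (fun j => b (lift ord0 j))).
Qed.

Section NonVanishing.
Variable R : numDomainType.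

Lemma exists_horner_neq0 (p : {poly R}) : p != 0 -> exists x, p.[x] != 0.
Proof.
move=> p_neq0; pose s := [seq (i%:R : R) | i <- iota 0 (size p)].
have s_uniq : uniq s.
  by rewrite map_inj_uniq ?iota_uniq // => i j /eqP; rewrite eqr_nat => /eqP.
case: (boolP (all (root p) s)) => [s_roots|/allPn [x _ px]]; last by exists x.
by have := max_poly_roots p_neq0 s_roots s_uniq; rewrite size_map size_iota ltnn.
Qed.

Lemma poly_eq0_off_roots (p h : {poly R}) :
  h != 0 -> (forall x, h.[x] != 0 -> p.[x] = 0) -> p = 0.
Proof.
move=> h_neq0 hp; apply/eqP; apply: contraT => p_neq0.
have [x] := exists_horner_neq0 (mulf_neq0 p_neq0 h_neq0).
by rewrite hornerM; case: (eqVneq h.[x] 0) => [->|/hp ->]; rewrite ?mulr0 ?mul0r eqxx.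
Qed.

(* Kronecker substitution [x_i := t ^+ N ^ i], with [N] bounding every exponent,
   maps distinct monomials of [p] to distinct powers of [t]. *)
Lemma exists_meval_neq0 n (p : {mpoly R[n]}) : p != 0 -> exists v, p.@[v] != 0.
Proof.
move=> p_neq0; pose N := msize p.
pose kron (m : 'X_{1..n}) := (\sum_(i < n) m i * N ^ i)%N.
have kron_inj : {in msupp p &, injective kron}.
  have lt_N m i : m \in msupp p -> (m i < N)%N.
    by move/msize_mdeg_lt; apply: leq_ltn_trans; rewrite mdegE (bigD1 i) //= leq_addr.
  by move=> m m' mp m'p /sum_digits_inj eq_mm'; apply/mnmP/eq_mm' => i; apply: lt_N.
pose Q : {poly R} := \sum_(m <- msupp p) p@_m *: 'X^(kron m).
have QE t : Q.[t] = p.@[fun i => t ^+ (N ^ i)].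
  rewrite mevalE horner_sum; apply: eq_bigr => m _; rewrite hornerZ hornerXn -prodrXr.
  by congr (_ * _); apply: eq_bigr => i _; rewrite -exprM mulnC.
have Q_coef m : m \in msupp p -> Q`_(kron m) = p@_m.
  move=> mp; rewrite coef_sum (bigD1_seq m) ?msupp_uniq //= coefZ coefXn eqxx mulr1.
  rewrite big1_seq ?addr0 // => m' /andP [m'm m'p]; rewrite coefZ coefXn.
  case: eqP => [/(kron_inj _ _ mp m'p) eq_m|_]; last by rewrite mulr0.
  by rewrite eq_m eqxx in m'm.
have Q_neq0 : Q != 0.
  apply/eqP => Q0; have := Q_coef _ (mlead_supp p_neq0).
  by rewrite Q0 coef0 => /esym/eqP; rewrite mleadc_eq0 (negPf p_neq0).
by have [t] := exists_horner_neq0 Q_neq0; rewrite QE; exists (fun i => t ^+ (N ^ i)).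
Qed.

End NonVanishing.

Lemma mxrank_mulmx_unit (F : fieldType) m n (A : 'M[F]_(m, n)) (B : 'M[F]_(n, m)) :
  A *m B \in unitmx -> \rank A = m /\ \rank B = m.
Proof.
move=> AB_unit; have := mxrankM_maxl A B; have := mxrankM_maxr A B.
rewrite mxrank_unit // => leB leA.
by split; apply/eqP; rewrite eqn_leq ?leA ?leB ?rank_leq_row ?rank_leq_col.
Qed.

Section ImageConics.
Variables (F : numFieldType) (d : nat).

Definition camera_images (P : 'M[F]_(3, 4)) (Ms : 'I_d -> 'M[F]_(4, 3))
    (Bs : 'I_d -> 'M[F]_3) (Y : 'M[F]_(d, 6)) : Prop :=
  [/\ camera P, forall i, center_off_plane P (Ms i)
    & forall i, is_image_conic (row i Y) P (Ms i) (Bs i)].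

Lemma conic_evalE (a : 'rV[F]_6) w : conic_eval a w = conic_val a w.
Proof. by []. Qed.

Definition half_conic_mx (a : 'rV[F]_6) : 'M[F]_3 := 2^-1 *: conic_mx a.

Lemma qform_half_conic_mx a u : qform (half_conic_mx a) u = conic_val a u.
Proof.
rewrite /qform /half_conic_mx -scalemxAr -scalemxAl mxE conic_mx_val.
by field.
Qed.

Lemma conic3_half_conic_mx M a :
  \rank M = 3%N -> conic_disc a != 0 -> conic3 M (half_conic_mx a).
Proof.
move=> rkM disc_a; split=> //; split; first by rewrite /half_conic_mx linearZ /= conic_mx_sym.
by rewrite /half_conic_mx detZ mulf_neq0 // expf_neq0 // invr_eq0 pnatr_eq0.
Qed.

Lemma is_image_conic_act a P M B (H : 'M[F]_3) :
  H \in unitmx -> conic_disc a != 0 -> P *m M = H -> qform B =1 conic_val a ->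
  is_image_conic (conic_act a (invmx H)) P M B.
Proof.
move=> H_unit disc_a PM BE; split.
  have det_neq0 : \det (invmx H) != 0 by rewrite -unitfE -unitmxE unitmx_inv.
  apply: contraTneq disc_a => act0; have := conic_disc_act a (invmx H).
  by rewrite act0 conic_disc0 => /esym/eqP; rewrite mulf_eq0 expf_eq0 (negPf det_neq0) negbK.
move=> w; rewrite conic_evalE conic_act_val; split.
  move=> [w_neq0 ww]; exists (invmx H *m w); split; last split.
  - by apply: contraNneq w_neq0 => Hw0; rewrite -(mulKVmx H_unit w) Hw0 mulmx0.
  - by rewrite BE.
  - by rewrite mulmxA PM mulKVmx.
move=> [u [u_neq0 [Bu ->]]]; rewrite mulmxA PM mulKmx // -BE Bu; split => //.
by apply: contraNneq u_neq0 => Hu0; rewrite -(mulKmx H_unit u) Hu0 mulmx0.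
Qed.

Lemma camera_images_act P Ms (H : 'I_d -> 'M[F]_3) (Y Z : 'M[F]_(d, 6)) :
  camera P -> (forall j, H j \in unitmx) -> (forall j, P *m Ms j = H j) ->
  (forall j, conic_disc (row j Y) != 0) ->
  (forall j, row j Z = conic_act (row j Y) (invmx (H j))) ->
  camera_images P Ms (fun j => half_conic_mx (row j Y)) Z.
Proof.
move=> camP H_unit PM disc_Y ZE; split=> // [j u Mu_neq0|j].
  rewrite mulmxA PM; apply: contraNneq Mu_neq0 => Hu0.
  by rewrite -[u](mulKmx (H_unit j)) Hu0 !mulmx0.
by rewrite ZE; apply: is_image_conic_act => //; apply: qform_half_conic_mx.
Qed.

End ImageConics.

Section CameraInvariance.
Variables (F : numFieldType) (d : nat) (p q : {mpoly F[d * 6]}).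

Definition camera_invariant : Prop :=
  forall (Ms : 'I_d -> 'M[F]_(4,3)) (Bs : 'I_d -> 'M[F]_3)
         (P P' : 'M[F]_(3,4)) (Y Y' : 'M[F]_(d, 6)),
    (forall i, conic3 (Ms i) (Bs i)) ->
    camera P -> camera P' ->
    (forall i, center_off_plane P (Ms i)) ->
    (forall i, center_off_plane P' (Ms i)) ->
    (forall i, is_image_conic (row i Y) P (Ms i) (Bs i)) ->
    (forall i, is_image_conic (row i Y') P' (Ms i) (Bs i)) ->
    mevalY q Y != 0 -> mevalY q Y' != 0 ->
    mevalY p Y / mevalY q Y = mevalY p Y' / mevalY q Y'.

Definition same_ratio (Y Y' : 'M[F]_(d, 6)) : Prop :=
  mevalY p Y * mevalY q Y' = mevalY p Y' * mevalY q Y.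

Lemma same_ratio_trans Y1 Y2 Y3 : mevalY q Y2 != 0 ->
  same_ratio Y1 Y2 -> same_ratio Y2 Y3 -> same_ratio Y1 Y3.
Proof.
move=> qY2 r12 r23; apply: (mulIf qY2).
transitivity (mevalY p Y1 * mevalY q Y2 * mevalY q Y3); first by ring.
rewrite r12; transitivity (mevalY q Y1 * (mevalY p Y2 * mevalY q Y3)); first by ring.
by rewrite r23; ring.
Qed.

Lemma camera_invariant_same_ratio Ms Bs P P' Y Y' : camera_invariant ->
  (forall i, conic3 (Ms i) (Bs i)) ->
  camera_images P Ms Bs Y -> camera_images P' Ms Bs Y' ->
  mevalY q Y != 0 -> mevalY q Y' != 0 -> same_ratio Y Y'.
Proof.
move=> inv conics [camP offP imY] [camP' offP' imY'] qY qY'.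
by apply/eqP; rewrite -eqr_div //; apply/eqP; apply: (inv Ms Bs P P').
Qed.

(* [P] sees every plane through the identity; the i-th plane is tilted by [v^T]
   so that [P'] sees it through [(1 + u v^T)^-1] and the others through the identity. *)
Lemma move_camera_images (Y : 'M[F]_(d, 6)) (o : move F d) :
  (forall j, conic_disc (row j Y) != 0) -> move_mx o \in unitmx ->
  let Bs j := half_conic_mx (row j Y) in
  exists Ms P P', [/\ forall j, conic3 (Ms j) (Bs j),
    camera_images P Ms Bs Y & camera_images P' Ms Bs (apply_move Y o)].
Proof.
move=> disc_Y g_unit Bs; set i := o.1.1; set G := invmx (move_mx o).
have G_unit : G \in unitmx by rewrite unitmx_inv.
pose Ms j : 'M[F]_(3 + 1, 3) := col_mx 1%:M (if j == i then o.2^T else 0).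
pose P : 'M[F]_(3, 3 + 1) := row_mx 1%:M 0.
pose P' : 'M[F]_(3, 3 + 1) := row_mx 1%:M (- (G *m o.1.2)).
have PM j : P *m Ms j = 1%:M by rewrite mul_row_col mul1mx mul0mx addr0.
have P'M j : P' *m Ms j = if j == i then G else 1%:M.
  rewrite mul_row_col mul1mx; case: (j == i); last by rewrite mulmx0 addr0.
  by rewrite mulNmx -mulmxA -{1}(mulVmx g_unit) /move_mx mulmxDr mulmx1 addrK.
have PM_unit j : P *m Ms j \in unitmx by rewrite PM unitmx1.
have P'M_unit j : P' *m Ms j \in unitmx by rewrite P'M; case: (j == i); rewrite ?unitmx1.
exists Ms, P, P'; split.
- move=> j; apply: conic3_half_conic_mx => //.
  by have [] := mxrank_mulmx_unit (PM_unit j).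
- apply: (camera_images_act (H := fun _ => 1%:M)) => // [|_|j].
  + by have [] := mxrank_mulmx_unit (PM_unit i).
  + exact: unitmx1.
  + by rewrite invmx1 conic_act1.
- apply: (camera_images_act (H := fun j => if j == i then G else 1%:M)) => // [|j|j].
  + by have [] := mxrank_mulmx_unit (P'M_unit i).
  + by rewrite -P'M.
  + by rewrite row_set_row; case: eqP => [->|_]; rewrite ?invmxK ?invmx1 ?conic_act1.
Qed.

Lemma same_ratio_move Y o : camera_invariant ->
  (forall j, conic_disc (row j Y) != 0) -> move_mx o \in unitmx ->
  mevalY q Y != 0 -> mevalY q (apply_move Y o) != 0 -> same_ratio Y (apply_move Y o).
Proof.
move=> inv disc_Y g_unit; have [Ms [P [P' [conics imY imY']]]] := move_camera_images disc_Y g_unit.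
exact: camera_invariant_same_ratio imY imY'.
Qed.

End CameraInvariance.

Section MovePaths.
Variables (F : numFieldType) (d : nat).

Definition mevalY_poly (r : {mpoly F[d * 6]}) (W : 'M[{poly F}]_(d, 6)) : {poly F} :=
  mmap (@polyC F) (fun k => mxvec W 0 k) r.

Lemma horner_mevalY_poly r W s :
  (mevalY_poly r W).[s] = mevalY r (map_mx (horner_eval s) W).
Proof.
rewrite /mevalY (meval_eq _ (_ : _ =1 fun k => (mxvec W 0 k).[s])); last first.
  by move=> k; rewrite -map_mxvec mxE.
rewrite mevalE /mevalY_poly /mmap -horner_evalE rmorph_sum; apply: eq_bigr => m _.
rewrite rmorphM /= /horner_eval hornerC /mmap1 -horner_evalE rmorph_prod; congr (_ * _).
by apply: eq_bigr => i _; rewrite rmorphXn.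
Qed.

Definition scale_move (s : F) (o : move F d) : move F d := (o.1.1, s *: o.1.2, o.2).

Definition lift_move (o : move F d) : move {poly F} d :=
  (o.1.1, 'X *: map_mx polyC o.1.2, map_mx polyC o.2).

Lemma horner_map_polyC s m n (A : 'M[F]_(m, n)) : map_mx (horner_eval s) (map_mx polyC A) = A.
Proof. by apply/matrixP => i j; rewrite !mxE /horner_eval hornerC. Qed.

Lemma map_move_lift s o : map_move (horner_eval s) (lift_move o) = scale_move s o.
Proof.
rewrite /map_move /lift_move /scale_move /= map_mxZ !horner_map_polyC.
by rewrite /= /horner_eval hornerX.
Qed.

Lemma horner_apply_lift_moves s os Y :
  map_mx (horner_eval s) (apply_moves (map_mx polyC Y) (map lift_move os))
  = apply_moves Y (map (scale_move s) os).
Proof.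
rewrite map_apply_moves horner_map_polyC -map_comp; congr apply_moves.
by apply: eq_map => o /=; rewrite map_move_lift.
Qed.

Lemma det_move_lift os s :
  (\prod_(o <- os) \det (move_mx (lift_move o))).[s]
  = \prod_(o <- os) \det (move_mx (scale_move s o)).
Proof.
rewrite -horner_evalE rmorph_prod; apply: eq_bigr => o _.
by rewrite -det_map_mx map_move_mx map_move_lift.
Qed.

Lemma apply_moves_scale0 os Y : apply_moves Y (map (scale_move 0) os) = Y.
Proof.
elim: os Y => [|o os IH] Y //=; suff -> : apply_move Y (scale_move 0 o) = Y by [].
apply/row_matrixP => j; rewrite row_set_row /move_mx /= scale0r mul0mx addr0 conic_act1.
by case: eqP => [->|].
Qed.

Lemma map_scale_move1 os : map (scale_move 1) os = os.
Proof. by elim: os => [|[[i u] v] os IH] //=; rewrite IH /scale_move /= scale1r. Qed.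

Lemma conic_disc_apply_moves (os : seq (move F d)) (Y : 'M[F]_(d, 6)) :
  all (fun o => \det (move_mx o) != 0) os -> (forall j, conic_disc (row j Y) != 0) ->
  forall j, conic_disc (row j (apply_moves Y os)) != 0.
Proof.
move=> os_unit disc_Y j; rewrite row_apply_moves conic_disc_act mulf_neq0 // expf_neq0 //.
rewrite (big_morph _ (@det_mulmx _ _) (@det1 _ _)) prodf_seq_neq0.
by apply/allP => o /(allP os_unit) det_neq0; apply/implyP.
Qed.

End MovePaths.

Arguments lift_move {F d} o.

Section MovesInvariance.
Variables (F : numFieldType) (d : nat) (p q : {mpoly F[d * 6]}).
Hypothesis inv : camera_invariant p q.

(* Scaling the last move and all earlier ones by [s] gives a polynomial path
   in [s]; the ratio identity holds off the roots of a polynomial that does not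
   vanish at [s = 0], hence identically, in particular at [s = 1]. *)
Lemma same_ratio_rcons os o (Y : 'M[F]_(d, 6)) :
  (forall j, conic_disc (row j Y) != 0) -> mevalY q Y != 0 ->
  (forall s, same_ratio p q Y (apply_moves Y (map (scale_move s) os))) ->
  same_ratio p q Y (apply_moves Y (rcons os o)).
Proof.
move=> disc_Y qY same_os.
pose Yp := map_mx polyC Y.
pose Z s := apply_moves Y (map (scale_move s) os).
pose W s := apply_moves Y (map (scale_move s) (rcons os o)).
have WE s : W s = apply_move (Z s) (scale_move s o) by rewrite /W map_rcons /apply_moves foldl_rcons.
pose Zp := apply_moves Yp (map lift_move os).
pose Wp := apply_moves Yp (map lift_move (rcons os o)).
have horner_Zp s : map_mx (horner_eval s) Zp = Z s by rewrite horner_apply_lift_moves.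
have horner_Wp s : map_mx (horner_eval s) Wp = W s by rewrite horner_apply_lift_moves.
pose ratio := (mevalY p Y)%:P * mevalY_poly q Wp - mevalY_poly p Wp * (mevalY q Y)%:P.
pose h := mevalY_poly q Zp * mevalY_poly q Wp
          * \prod_(o' <- rcons os o) \det (move_mx (lift_move o')).
have h_neq0 : h != 0.
  apply: contra_neq qY => /(congr1 (horner^~ 0)).
  rewrite horner0 !hornerM det_move_lift !horner_mevalY_poly horner_Zp horner_Wp.
  rewrite /Z /W !apply_moves_scale0 big1 ?mulr1 => [/eqP|o' _]; last first.
    by rewrite /move_mx /= scale0r mul0mx addr0 det1.
  by rewrite mulf_eq0 orbb => /eqP.
have ratio0 : ratio = 0.
  apply: (poly_eq0_off_roots h_neq0) => s.
  rewrite !hornerM det_move_lift !horner_mevalY_poly horner_Zp horner_Wp !mulf_eq0 !negb_or.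
  rewrite prodf_seq_neq0 all_rcons /= => /andP [/andP [qZ qW] /andP [det_o det_os]].
  have disc_Z : forall j, conic_disc (row j (Z s)) != 0.
    by apply: conic_disc_apply_moves disc_Y; rewrite all_map.
  have o_unit : move_mx (scale_move s o) \in unitmx by rewrite unitmxE unitfE.
  rewrite WE in qW; have := same_ratio_move inv disc_Z o_unit qZ qW; rewrite -WE => same_ZW.
  have := same_ratio_trans qZ (same_os s) same_ZW.
  by rewrite /same_ratio !hornerE !horner_mevalY_poly horner_Wp => ->; rewrite subrr.
move/(congr1 (horner^~ 1)): ratio0.
rewrite /ratio horner0 !hornerE !horner_mevalY_poly horner_Wp /W map_scale_move1.
by move/eqP; rewrite subr_eq0 => /eqP.
Qed.

Lemma same_ratio_apply_moves os (Y : 'M[F]_(d, 6)) :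
  (forall j, conic_disc (row j Y) != 0) -> mevalY q Y != 0 ->
  same_ratio p q Y (apply_moves Y os).
Proof.
move=> disc_Y qY; have [n] := ubnP (size os); elim: n os => // n IH os.
case/lastP: os => [_|os o]; first by rewrite /same_ratio mulrC.
rewrite size_rcons ltnS => os_lt; apply: same_ratio_rcons => // s.
by apply: IH; rewrite size_map.
Qed.

End MovesInvariance.

Section TriangularMoves.
Variables (T : comNzRingType) (d : nat).

Definition triu3 (x00 x01 x02 x11 x12 x22 : T) : 'M[T]_3 :=
  \matrix_(i, j) nth 0 (nth [::] [:: [:: x00; x01; x02]; [:: 0; x11; x12]; [:: 0; 0; x22]] i) j.

Lemma triu3_trig x00 x01 x02 x11 x12 x22 : is_trig_mx (triu3 x00 x01 x02 x11 x12 x22)^T.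
Proof.
by apply/is_trig_mxP => i j; rewrite !mxE; case: (ord3_cases i) => ->; case: (ord3_cases j) => ->.
Qed.

Lemma det_triu3 x00 x01 x02 x11 x12 x22 :
  \det (triu3 x00 x01 x02 x11 x12 x22) = x00 * x11 * x22.
Proof.
by rewrite -det_tr det_trig ?triu3_trig // !big_ord_recl big_ord0 !mxE /= mulr1 mulrA.
Qed.

(* [row_move i H k] replaces the k-th row of the identity by that of [H]. *)
Definition row_move (i : 'I_d) (H : 'M[T]_3) (k : 'I_3) : move T d :=
  (i, col k 1%:M, (row k H - row k 1%:M)^T).

Definition triu_moves (i : 'I_d) (H : 'M[T]_3) : seq (move T d) :=
  [seq row_move i H k | k <- [:: 2%:R; 1; 0]].

Lemma prod_triu_moves i (H : 'M[T]_3) :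
  is_trig_mx H^T -> \prod_(o <- triu_moves i H) move_mx o = H.
Proof.
move/is_trig_mxP => H_up; have H_low (j k : 'I_3) : (k < j)%N -> H j k = 0.
  by move=> kj; have := H_up k j kj; rewrite mxE.
have [H10 H20 H21] : [/\ H 1 0 = 0, H 2%:R 0 = 0 & H 2%:R 1 = 0] by split; apply: H_low.
rewrite !big_cons big_nil mulr1 -!mulmxE; apply/matrixP => x y.
rewrite !mulmx3E /move_mx /= !mxE !big_ord1 !mxE /=.
by case: (ord3_cases x) => ->; case: (ord3_cases y) => -> /=; rewrite ?H10 ?H20 ?H21; ring.
Qed.

Lemma prod_flatten_moves (ms : 'I_d -> seq (move T d)) j :
  (forall i, all (fun o => o.1.1 == i) (ms i)) ->
  \prod_(o <- flatten [seq ms i | i <- enum 'I_d] | o.1.1 == j) move_mx o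
  = \prod_(o <- ms j) move_mx o.
Proof.
move=> ms_row; rewrite big_flatten big_map.
rewrite (eq_bigr (fun i => if i == j then \prod_(o <- ms j) move_mx o else 1)) => [|i _].
  rewrite -big_mkcond -big_filter (@filter_pred1_uniq _ _ j) ?enum_uniq ?mem_enum //.
  exact: big_seq1.
rewrite big_seq_cond; case: eqP => [->|ij].
  by rewrite [RHS]big_seq; apply: eq_bigl => o; apply: andb_idr => /(allP (ms_row j)).
apply: big1 => o /andP [/(allP (ms_row i)) /eqP -> /eqP //].
Qed.

End TriangularMoves.

Section StandardForm.
Variable C : numClosedFieldType.

Definition conic_std : 'rV[C]_6 := \row_(k < 6) [:: 1; 1; 1; 0; 0; 0]`_k.

Lemma conic_mx_std : conic_mx conic_std = 2%:M.
Proof.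
apply/matrixP => i j; rewrite !mxE.
by case: (ord3_cases i) => ->; case: (ord3_cases j) => -> /=; rewrite ?mxE.
Qed.

Lemma lead_minors_std : lead_minors conic_std != 0.
Proof.
rewrite /lead_minors /conic_disc conic_mx_std det_scalar !mxE /=.
by rewrite (_ : _ * _ = 32%:R) ?pnatr_eq0 //; ring.
Qed.

Section LDL.
Variable a : 'rV[C]_6.
Hypothesis minors_a : lead_minors a != 0.

Let al := a 0 3%:R / (2 * a 0 0).
Let be := a 0 4%:R / (2 * a 0 0).
Let ep := a 0 1 - a 0 3%:R ^+ 2 / (4 * a 0 0).
Let fp := a 0 5%:R / 2 - a 0 3%:R * a 0 4%:R / (4 * a 0 0).
Let ga := fp / ep.
Let kp := a 0 2%:R - a 0 4%:R ^+ 2 / (4 * a 0 0) - fp ^+ 2 / ep.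
Let r0 := sqrtC (a 0 0).
Let r1 := sqrtC ep.
Let r2 := sqrtC kp.

(* Completing the square twice: [a = a00 (x + al y + be z)^2 + ep (y + ga z)^2 + kp z^2]. *)
Definition ldl_mx : 'M[C]_3 := triu3 r0 (r0 * al) (r0 * be) r1 (r1 * ga) r2.

Definition ldl_inv : 'M[C]_3 :=
  triu3 r0^-1 (- al / r1) ((al * ga - be) / r2) r1^-1 (- ga / r2) r2^-1.

Let minors_neq0 :
  [/\ a 0 0 != 0, a 0 1 * (4 * a 0 0) - a 0 3%:R ^+ 2 != 0 & conic_disc a != 0].
Proof.
by move: minors_a; rewrite /lead_minors !mulf_eq0 !negb_or (mulrC (4 * _)) => /andP [/andP [-> ->] ->].
Qed.

Lemma conic_act_std_ldl : conic_act conic_std ldl_mx = a.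
Proof.
apply: conic_val_inj => w; rewrite conic_act_val /conic_val /conic_form !mulmx3E !mxE /=.
set x := w 0 0; set y := w 1 0; set z := w 2%:R 0.
transitivity (r0 ^+ 2 * (x + al * y + be * z) ^+ 2 + r1 ^+ 2 * (y + ga * z) ^+ 2
              + r2 ^+ 2 * z ^+ 2); first by ring.
rewrite /r0 /r1 /r2 !sqrtCK /ga /kp /fp /ep /al /be.
by have [a00_neq0 minor2_neq0 _] := minors_neq0; field; rewrite a00_neq0 minor2_neq0.
Qed.

Let r_neq0 : [&& r0 != 0, r1 != 0 & r2 != 0].
Proof.
have [_ _] := minors_neq0.
rewrite -conic_act_std_ldl conic_disc_act /ldl_mx det_triu3 /conic_disc conic_mx_std det_scalar.
by rewrite !mulf_eq0 !negb_or => /and4P [/and3P [/andP [/andP [-> ->] ->] _ _] _ _ _].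
Qed.

Lemma ldl_mxV : ldl_mx *m ldl_inv = 1%:M.
Proof.
have /and3P [r0_neq0 r1_neq0 r2_neq0] := r_neq0.
apply/matrixP => x y; rewrite mulmx3E !mxE.
by case: (ord3_cases x) => ->; case: (ord3_cases y) => -> /=; field; rewrite ?r0_neq0 ?r1_neq0 ?r2_neq0.
Qed.

Lemma conic_act_ldl_inv : conic_act a ldl_inv = conic_std.
Proof. by rewrite -{1}conic_act_std_ldl conic_actM ldl_mxV conic_act1. Qed.

End LDL.
End StandardForm.

Lemma lead_minors_disc (T : idomainType) (a : 'rV[T]_6) :
  lead_minors a != 0 -> conic_disc a != 0.
Proof. by rewrite /lead_minors !mulf_eq0 !negb_or => /andP [_]. Qed.

Section Proportionality.
Variables (C : numClosedFieldType) (d : nat).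

Definition reach_moves (Y0 Y : 'M[C]_(d, 6)) : seq (move C d) :=
  flatten [seq triu_moves i (ldl_inv (row i Y0)) ++ triu_moves i (ldl_mx (row i Y))
          | i <- enum 'I_d].

Lemma apply_reach_moves (Y0 Y : 'M[C]_(d, 6)) :
  (forall i, lead_minors (row i Y0) != 0) -> (forall i, lead_minors (row i Y) != 0) ->
  apply_moves Y0 (reach_moves Y0 Y) = Y.
Proof.
move=> minors_Y0 minors_Y; apply/row_matrixP => j.
rewrite row_apply_moves prod_flatten_moves => [|i]; last first.
  by rewrite all_cat !all_map /= !eqxx.
rewrite big_cat /= !prod_triu_moves; try exact: triu3_trig.
by rewrite -mulmxE -conic_actM conic_act_ldl_inv // conic_act_std_ldl.
Qed.

Definition conic_var (i : 'I_d) : 'rV[{mpoly C[d * 6]}]_6 := \row_k 'X_(mxvec_index i k).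

Definition minors_poly : {mpoly C[d * 6]} := \prod_i lead_minors (conic_var i).

Lemma mevalY_minors_poly Y : mevalY minors_poly Y = \prod_i lead_minors (row i Y).
Proof.
rewrite /mevalY rmorph_prod; apply: eq_bigr => i _; rewrite map_lead_minors.
by congr lead_minors; apply/rowP => k; rewrite !mxE /= mevalXU mxvecE.
Qed.

Lemma exists_mevalY_neq0 (r : {mpoly C[d * 6]}) : r != 0 -> exists Y, mevalY r Y != 0.
Proof.
move=> /exists_meval_neq0 [v rv]; exists (vec_mx (\row_k v k)).
by rewrite /mevalY vec_mxK (meval_eq _ (_ : _ =1 v)) // => k; rewrite mxE.
Qed.

Lemma minors_poly_neq0 : minors_poly != 0.
Proof.
apply: contra_neq (lead_minors_std C) => minors0.
have := mevalY_minors_poly (\matrix_(i, k) conic_std C 0 k).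
rewrite minors0 /mevalY meval0 => /esym/eqP; rewrite prodf_seq_eq0 => /hasP [i _ /=].
by rewrite (_ : row i _ = conic_std C) => [/eqP|]; last by apply/rowP => k; rewrite !mxE.
Qed.

Lemma minors_poly_rows Y : mevalY minors_poly Y != 0 -> forall i, lead_minors (row i Y) != 0.
Proof.
by rewrite mevalY_minors_poly prodf_seq_neq0 => /allP minors_Y i; apply: minors_Y; rewrite mem_index_enum.
Qed.

Theorem camera_invariant_proportional (p q : {mpoly C[d * 6]}) :
  q != 0 -> camera_invariant p q -> exists c, p = c *: q.
Proof.
move=> q_neq0 inv; set D := minors_poly.
have [Y0] := exists_mevalY_neq0 (mulf_neq0 q_neq0 minors_poly_neq0).
rewrite /mevalY mevalM mulf_eq0 negb_or -!/(mevalY _ Y0) => /andP [qY0 DY0].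
have same Y : mevalY D Y != 0 -> same_ratio p q Y0 Y.
  move=> /minors_poly_rows minors_Y; rewrite -(apply_reach_moves (minors_poly_rows DY0) minors_Y).
  by apply: same_ratio_apply_moves => // i; apply/lead_minors_disc/minors_poly_rows.
pose r := p * (mevalY q Y0)%:MP - q * (mevalY p Y0)%:MP.
have /eqP : r * D = 0.
  apply/eqP; apply: contraT => /exists_mevalY_neq0 [Y].
  rewrite /mevalY mevalM -/(mevalY D Y) mulf_eq0 negb_or => /andP [+ /same].
  rewrite /same_ratio /r mevalB !mevalM !mevalC -!/(mevalY _ Y) => + same_Y.
  by rewrite -same_Y mulrC subrr eqxx.
rewrite mulf_eq0 (negPf minors_poly_neq0) orbF subr_eq0 => /eqP pq.
exists ((mevalY q Y0)^-1 * mevalY p Y0).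
rewrite -scalerA -[mevalY p Y0 *: q]mul_mpolyC [_ * q]mulrC -pq mulrC mul_mpolyC.
by rewrite scalerA mulVf // scale1r.
Qed.

End Proportionality.

Theorem mainTheorem3 (R : realType) (d : nat) (hd : (1 <= d)%N)
    (p q : {mpoly (CC R)[d * 6]}) :
  rat_fun_repr p q ->
  (forall (Ms : 'I_d -> 'M[CC R]_(4,3)) (Bs : 'I_d -> 'M[CC R]_3)
          (P P' : 'M[CC R]_(3,4)) (Y Y' : 'M[CC R]_(d, 6)),
      (forall i, conic3 (Ms i) (Bs i)) ->
      camera P -> camera P' ->
      (forall i, center_off_plane P (Ms i)) ->
      (forall i, center_off_plane P' (Ms i)) ->
      (forall i, is_image_conic (row i Y) P (Ms i) (Bs i)) ->
      (forall i, is_image_conic (row i Y') P' (Ms i) (Bs i)) ->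
      mevalY q Y != 0 -> mevalY q Y' != 0 ->
      mevalY p Y / mevalY q Y = mevalY p Y' / mevalY q Y') ->
  exists c : CC R, p = c *: q.
Proof.
move=> [q_neq0 _] inv.
exact: (@camera_invariant_proportional R[i] d p q q_neq0 inv).
Qed.
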